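(* A closed reversible reaction network $(X,\mathscr{R})$ with stoichiometric matrix $S$ is free of cornucopias and abysses if and only if there is no vector $v\in\mathbb{R}^{\mathscr{R}}$ such that $Sv>0$.
   Context: A reaction network (RN) $(X,\mathscr{R})$ consists of a finite non-empty set $X$ of species and a finite non-empty set $\mathscr{R}$ of reactions. Each reaction $r$ is given by stoichiometric coefficients $s^-_{xr},s^+_{xr}\in\mathbb{N}_0$. The stoichiometric matrix $S\in\mathbb{Z}^{X\times\mathscr{R}}$ has entries $S_{xr}=s^+_{xr}-s^-_{xr}$. The RN is closed if every reaction $r$ has $x,y$ with $S_{xr}<0<S_{yr}$. The reverse $\bar r$ of $r$ has $s^-_{x\bar r}=s^+_{xr}$ and $s^+_{x\bar r}=s^-_{xr}$. The RN is reversible if $r\in\mathscr{R}$ implies $\bar r\in\mathscr{R}$. For a real vector $w$, $w>0$ means $w$ is componentwise non-negative and nonzero, and $w<0$ means $-w>0$. A vector $v\in\mathbb{R}^{\mathscr{R}}$ with $v>0$ is a cornucopia if $Sv>0$ and an abyss if $Sv<0$. *)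

From mathcomp Require Import all_boot all_order all_algebra.
Set Implicit Arguments. Unset Strict Implicit. Unset Printing Implicit Defensive.
Import Order.TTheory GRing.Theory Num.Theory.
Local Open Scope ring_scope.

(* A reaction network with species X and reactions Rn (finite types), given by
   stoichiometric coefficients sm x r = s^-_{xr} and sp x r = s^+_{xr}. *)

Definition stoich {X Rn : finType} (sm sp : X -> Rn -> nat) {R : pzRingType}
  (x : X) (r : Rn) : R := (sp x r)%:R - (sm x r)%:R.

Definition stoich_apply {X Rn : finType} (sm sp : X -> Rn -> nat) {R : pzRingType}
  (v : Rn -> R) (x : X) : R := \sum_(r : Rn) stoich sm sp x r * v r.

Definition closed_RN {X Rn : finType} (sm sp : X -> Rn -> nat) : Prop :=
  forall r : Rn, exists x y : X,
    (stoich sm sp x r < 0 :> int) /\ (0 < stoich sm sp y r :> int).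

Definition reversible_RN {X Rn : finType} (sm sp : X -> Rn -> nat) : Prop :=
  forall r : Rn, exists rb : Rn, forall x : X, sm x rb = sp x r /\ sp x rb = sm x r.

(* w > 0 : componentwise nonnegative and nonzero *)
Definition vpos {I : Type} {R : numDomainType} (w : I -> R) : Prop :=
  (forall i, 0 <= w i) /\ exists i, w i != 0.

Definition vneg {I : Type} {R : numDomainType} (w : I -> R) : Prop :=
  vpos (fun i => - w i).

Definition cornucopia {X Rn : finType} (sm sp : X -> Rn -> nat) {R : numDomainType}
  (v : Rn -> R) : Prop := vpos v /\ vpos (stoich_apply sm sp v).

Definition abyss {X Rn : finType} (sm sp : X -> Rn -> nat) {R : numDomainType}
  (v : Rn -> R) : Prop := vpos v /\ vneg (stoich_apply sm sp v).

From mathcomp Require Import all_boot all_order all_algebra.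
Set Implicit Arguments. Unset Strict Implicit. Unset Printing Implicit Defensive.
Import Order.TTheory GRing.Theory Num.Theory.
Local Open Scope ring_scope.

(* If S v > 0 for some v, write v = p - n with p, n >= 0.  Reversibility gives
   a map r |-> rb with S e_rb = - S e_r, so - S n is the image of the
   nonnegative vector obtained by moving the mass of n from each r to rb.
   Hence w := p + (n moved to the reverse reactions) is a cornucopia with
   S w = S v.  Conversely a cornucopia v has S v > 0, and an abyss v has
   S (-v) > 0. *)

Lemma eq_vpos (I : Type) (R : numDomainType) (v w : I -> R) :
  v =1 w -> vpos v -> vpos w.
Proof. by move=> e [v_ge0 [i vi_neq0]]; split=> [j|]; [|exists i]; rewrite -e. Qed.

Section Stoichiometry.

Variables (X Rn : finType) (sm sp : X -> Rn -> nat).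

Lemma stoich_applyN (R : pzRingType) (v : Rn -> R) x :
  stoich_apply sm sp (fun r => - v r) x = - stoich_apply sm sp v x.
Proof. by rewrite /stoich_apply -sumrN; apply: eq_bigr => r _; rewrite mulrN. Qed.

Lemma stoich_applyD (R : pzRingType) (v w : Rn -> R) x :
  stoich_apply sm sp (fun r => v r + w r) x
  = stoich_apply sm sp v x + stoich_apply sm sp w x.
Proof. by rewrite /stoich_apply -big_split; apply: eq_bigr => r _; rewrite mulrDr. Qed.

Lemma stoich_apply_eq0 (R : pzRingType) (v : Rn -> R) x :
  (forall r, v r = 0) -> stoich_apply sm sp v x = 0.
Proof. by move=> v0; rewrite /stoich_apply big1 // => r _; rewrite v0 mulr0. Qed.

Lemma reversible_stoich_rev :
  reversible_RN sm sp ->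
  exists rev : Rn -> Rn,
    forall (R : pzRingType) x r, stoich sm sp x (rev r) = - stoich sm sp x r :> R.
Proof.
move=> /fin_all_exists[rev rev_coef]; exists rev => R x r.
by rewrite /stoich; have [-> ->] := rev_coef r x; rewrite opprB.
Qed.

Lemma stoich_apply_pushforward (R : pzRingType) (f : Rn -> Rn) (v : Rn -> R) x :
  stoich_apply sm sp (fun r => \sum_(r0 | f r0 == r) v r0) x
  = \sum_r stoich sm sp x (f r) * v r.
Proof.
rewrite /stoich_apply [RHS](partition_big f predT) //=.
by apply: eq_bigr => r _; rewrite mulr_sumr; apply: eq_bigr => r0 /eqP ->.
Qed.

Lemma reversible_nonneg_preimage (R : realDomainType) (v : Rn -> R) :
  reversible_RN sm sp ->
  exists w : Rn -> R,
    (forall r, 0 <= w r) /\ stoich_apply sm sp w =1 stoich_apply sm sp v.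
Proof.
move=> /reversible_stoich_rev[rev stoich_rev].
pose p r := Num.max (v r) 0; pose n r := p r - v r.
have p_ge0 r : 0 <= p r by rewrite le_max lexx orbT.
have n_ge0 r : 0 <= n r by rewrite subr_ge0 le_max lexx.
exists (fun r => p r + \sum_(r0 | rev r0 == r) n r0); split=> [r|x].
  by rewrite addr_ge0 ?sumr_ge0.
rewrite stoich_applyD stoich_apply_pushforward.
under eq_bigr do rewrite stoich_rev mulNr.
rewrite sumrN -/(stoich_apply sm sp n x) -stoich_applyN -stoich_applyD.
by apply: eq_bigr => r _; rewrite /n opprB addrC subrK.
Qed.

Lemma reversible_cornucopia (R : realDomainType) (v : Rn -> R) :
  reversible_RN sm sp -> vpos (stoich_apply sm sp v) ->
  exists w : Rn -> R, cornucopia sm sp w.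
Proof.
move=> /(reversible_nonneg_preimage v)[w [w_ge0 Sw]] Sv_pos.
have Sw_pos : vpos (stoich_apply sm sp w) by apply: eq_vpos Sv_pos => x; rewrite Sw.
exists w; split=> //; split=> //.
have [x Swx_neq0] := Sw_pos.2; apply/existsP; apply: contraNT Swx_neq0.
by move=> /existsPn w0; rewrite stoich_apply_eq0 // => r; apply/eqP/negPn/w0.
Qed.

End Stoichiometry.

Theorem proposition6 (R : realFieldType) (X Rn : finType)
  (sm sp : X -> Rn -> nat)
  (hX : (0 < #|X|)%N) (hRn : (0 < #|Rn|)%N)
  (hclosed : closed_RN sm sp) (hrev : reversible_RN sm sp) :
  ((forall v : Rn -> R, ~ cornucopia sm sp v) /\
   (forall v : Rn -> R, ~ abyss sm sp v))
  <-> ~ (exists v : Rn -> R, vpos (stoich_apply sm sp v)).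
Proof.
split=> [[no_cornucopia _] [v Sv_pos] | no_pos_image].
  by have [w] := reversible_cornucopia hrev Sv_pos; apply: no_cornucopia.
split=> v [_ Sv_sign]; apply: no_pos_image; first by exists v.
by exists (fun r => - v r); apply: eq_vpos Sv_sign => x; rewrite stoich_applyN.
Qed.
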